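(* Let $G$ be a 4-dimensional connected Lie group with a global basis $\{X_1,\dots,X_4\}$ of left invariant vector fields satisfying, for real constants $\lambda_1,\dots,\lambda_4$, $[X_1,X_2]=\lambda_1X_1+\lambda_2X_2$, $[X_1,X_3]=\lambda_3X_2-\lambda_1X_4$, $[X_1,X_4]=-\lambda_3X_1-\lambda_2X_4$, $[X_2,X_3]=\lambda_4X_2+\lambda_1X_3$, $[X_2,X_4]=-\lambda_4X_1+\lambda_2X_3$, $[X_3,X_4]=\lambda_3X_3+\lambda_4X_4$, and let $JX_1=X_3$, $JX_2=X_4$, $JX_3=-X_1$, $JX_4=-X_2$, $g(X_1,X_1)=g(X_2,X_2)=-g(X_3,X_3)=-g(X_4,X_4)=1$, $g(X_i,X_j)=0$ for $i\ne j$. Let $\nabla'$ be a natural connection on $(G,J,g)$ with totally skew-symmetric torsion tensor $T$. Then $\nabla'_{X_1}X_1=\nabla'_{X_3}X_3=-\lambda_1X_2-\lambda_3X_4$, $\nabla'_{X_2}X_2=\nabla'_{X_4}X_4=\lambda_2X_1+\lambda_4X_3$, $\nabla'_{X_1}X_2=\nabla'_{X_3}X_4=\lambda_1X_1+\lambda_3X_3$, $\nabla'_{X_1}X_3=-\nabla'_{X_3}X_1=\lambda_3X_2-\lambda_1X_4$, $\nabla'_{X_1}X_4=-\nabla'_{X_3}X_2=-\lambda_3X_1+\lambda_1X_3$, $\nabla'_{X_2}X_1=\nabla'_{X_4}X_3=-\lambda_2X_2-\lambda_4X_4$, $\nabla'_{X_2}X_3=-\nabla'_{X_4}X_1=\lambda_4X_2-\lambda_2X_4$,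 $\nabla'_{X_2}X_4=-\nabla'_{X_4}X_2=-\lambda_4X_1+\lambda_2X_3$, and the components $T_{ijk}=g(T(X_i,X_j),X_k)$ are all zero except those determined by total skew-symmetry from $T_{134}=\lambda_1$, $T_{234}=\lambda_2$, $T_{123}=-\lambda_3$, $T_{124}=-\lambda_4$.
   Context: A linear connection $\nabla'$ on an almost complex manifold with Norden metric $(M,J,g)$ ($J^2=-\mathrm{Id}$, $g(Jx,Jy)=-g(x,y)$) is natural if $\nabla'J=0$ and $\nabla'g=0$. Its torsion is $T(x,y)=\nabla'_xy-\nabla'_yx-[x,y]$, and $T(x,y,z)=g(T(x,y),z)$; the torsion is totally skew-symmetric if $T(x,y,z)$ is a 3-form, i.e. skew-symmetric in every pair of arguments. *)

(* Algebraic model of the smooth setting: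
   F  = ring of smooth real functions on G (a commutative R-algebra),
   V  = module of vector fields; since X_1..X_4 is a global frame, every
        vector field is uniquely  sum_i x_i X_i  with x_i in F, so V = F^4
        (row vectors), and X_i is the i-th standard basis vector.
   D i : F -> F  is the action of X_i on functions (an R-linear derivation),
   and the action of a general vector field x on f is  sum_i x_i D_i f.  *)
From HB Require Import structures.
From mathcomp Require Import all_boot all_order all_algebra.
From mathcomp Require Import reals.
Set Implicit Arguments. Unset Strict Implicit. Unset Printing Implicit Defensive.
Import Order.TTheory GRing.Theory Num.Theory.
Local Open Scope ring_scope.

Section Model.
Variables (R : realType) (F : comAlgType R).

Definition vf := 'rV[F]_4.

Definition i1 : 'I_4 := @Ordinal 4 0 erefl.
Definition i2 : 'I_4 := @Ordinal 4 1 erefl.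
Definition i3 : 'I_4 := @Ordinal 4 2 erefl.
Definition i4 : 'I_4 := @Ordinal 4 3 erefl.

Definition X (i : 'I_4) : vf := delta_mx 0 i.

Definition comb (a1 a2 a3 a4 : R) : vf :=
  (a1%:A : F) *: X i1 + (a2%:A : F) *: X i2 + (a3%:A : F) *: X i3 + (a4%:A : F) *: X i4.

Definition brX (l1 l2 l3 l4 : R) (i j : 'I_4) : vf :=
  match nat_of_ord i, nat_of_ord j with
  | 0, 1 => comb l1 l2 0 0
  | 1, 0 => - comb l1 l2 0 0
  | 0, 2 => comb 0 l3 0 (- l1)
  | 2, 0 => - comb 0 l3 0 (- l1)
  | 0, 3 => comb (- l3) 0 0 (- l2)
  | 3, 0 => - comb (- l3) 0 0 (- l2)
  | 1, 2 => comb 0 l4 l1 0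
  | 2, 1 => - comb 0 l4 l1 0
  | 1, 3 => comb (- l4) 0 l2 0
  | 3, 1 => - comb (- l4) 0 l2 0
  | 2, 3 => comb 0 0 l3 l4
  | 3, 2 => - comb 0 0 l3 l4
  | _, _ => 0
  end.

Definition act (D : 'I_4 -> F -> F) (x : vf) (f : F) : F :=
  \sum_i x 0 i * D i f.

Definition bracket (D : 'I_4 -> F -> F) (c : 'I_4 -> 'I_4 -> vf) (x y : vf) : vf :=
  \row_k (act D x (y 0 k) - act D y (x 0 k))
  + \sum_i \sum_j (x 0 i * y 0 j) *: c i j.

Definition eps (i : 'I_4) : R := if (nat_of_ord i < 2)%N then 1 else -1.
Definition gmet (x y : vf) : F := \sum_i ((eps i)%:A : F) * x 0 i * y 0 i.

Definition Jop (x : vf) : vf :=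
  \row_k (match nat_of_ord k with
          | 0 => - x 0 i3
          | 1 => - x 0 i4
          | 2 => x 0 i1
          | _ => x 0 i2
          end).

Definition is_frame_action (D : 'I_4 -> F -> F) (c : 'I_4 -> 'I_4 -> vf) : Prop :=
  [/\ forall i f h, D i (f + h) = D i f + D i h,
      forall i (a : R) f, D i (a *: f) = a *: D i f,
      forall i f h, D i (f * h) = D i f * h + f * D i h &
      forall i j f, D i (D j f) - D j (D i f) = act D (c i j) f].

Definition is_connection (D : 'I_4 -> F -> F) (nab : vf -> vf -> vf) : Prop :=
  [/\ forall (f : F) x y z, nab (f *: x + y) z = f *: nab x z + nab y z,
      forall x y z, nab x (y + z) = nab x y + nab x z &
      forall (f : F) x y, nab x (f *: y) = act D x f *: y + f *: nab x y].

Definition is_natural (D : 'I_4 -> F -> F) (nab : vf -> vf -> vf) : Prop :=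
  (forall x y, nab x (Jop y) = Jop (nab x y)) /\
  (forall x y z, act D x (gmet y z) = gmet (nab x y) z + gmet y (nab x z)).

Definition torsion D c (nab : vf -> vf -> vf) (x y : vf) : vf :=
  nab x y - nab y x - bracket D c x y.

Definition torsion3 D c nab (x y z : vf) : F := gmet (torsion D c nab x y) z.

Definition totally_skew D c nab : Prop :=
  forall x y z, torsion3 D c nab x y z = - torsion3 D c nab y x z /\
                torsion3 D c nab x y z = - torsion3 D c nab x z y.

End Model.

(* Write G_ij^k for the X_k-coefficient of nab_{X_i} X_j.  Compatibility with g makes
   eps_k G_ij^k skew in (j, k), and nab J = 0 gives nab_{X_i} X_3 = J nab_{X_i} X_1 and
   nab_{X_i} X_4 = J nab_{X_i} X_2; together they leave, for each i, only the two unknowns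
   G_i1^2 and G_i1^4.  A totally skew torsion satisfies T(X_b, X_a, X_b) = 0, which, since
   G_ab^b = 0, says that G_ba^b is the structure constant [X_b, X_a]^b; each of the eight
   unknowns occurs in exactly one of these equations. *)

From HB Require Import structures.
From mathcomp Require Import all_boot all_order all_algebra.
From mathcomp Require Import reals ring.
Set Implicit Arguments. Unset Strict Implicit. Unset Printing Implicit Defensive.
Import Order.TTheory GRing.Theory Num.Theory.
Local Open Scope ring_scope.

Lemma addrr_eq0 (K : numFieldType) (V : lmodType K) (v : V) : (v + v == 0) = (v == 0).
Proof. by rewrite -mulr2n -scaler_nat scaler_eq0 pnatr_eq0. Qed.

Section Derivation.
Variables (R : numFieldType) (A : comAlgType R) (d : A -> A).
Hypotheses (dZ : forall (a : R) f, d (a *: f) = a *: d f)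
           (dM : forall f h, d (f * h) = d f * h + f * d h).

Lemma derivation1 : d 1 = 0.
Proof.
have := dM 1 1; rewrite !mul1r mulr1 => d1.
by apply: (addrI (d 1)); rewrite addr0 -d1.
Qed.

Lemma derivation_scalar (a : R) : d a%:A = 0.
Proof. by rewrite dZ derivation1 scaler0. Qed.

End Derivation.

Section Frame.
Variables (R : realType) (F : comAlgType R).

Lemma ord4P (P : 'I_4 -> Prop) : P i1 -> P i2 -> P i3 -> P i4 -> forall i, P i.
Proof.
move=> P1 P2 P3 P4 [[|[|[|[|n]]]] lt_n4] //.
- by rewrite (_ : Ordinal _ = i1) //; apply: val_inj.
- by rewrite (_ : Ordinal _ = i2) //; apply: val_inj.
- by rewrite (_ : Ordinal _ = i3) //; apply: val_inj.
- by rewrite (_ : Ordinal _ = i4) //; apply: val_inj.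
Qed.

Definition row4 (a b c d : F) : vf F :=
  \row_k (match nat_of_ord k with 0 => a | 1 => b | 2 => c | _ => d end).

Lemma row4E (v : vf F) : v = row4 (v 0 i1) (v 0 i2) (v 0 i3) (v 0 i4).
Proof. by apply/rowP; apply: ord4P; rewrite mxE. Qed.

Lemma combE (a b c d : R) : comb F a b c d = row4 a%:A b%:A c%:A d%:A.
Proof. by apply/rowP; apply: ord4P; rewrite !mxE /= !mulr1 !mulr0 ?add0r ?addr0. Qed.

Lemma opp_row4 a b c d : - row4 a b c d = row4 (- a) (- b) (- c) (- d).
Proof. by apply/rowP; apply: ord4P; rewrite !mxE. Qed.

Lemma Jop_row4 a b c d : Jop (row4 a b c d) = row4 (- c) (- d) a b.
Proof. by apply/rowP; apply: ord4P; rewrite !mxE. Qed.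

Lemma X_coord i k : X F i 0 k = (i == k)%:R.
Proof. by rewrite /X mxE eq_sym. Qed.

Lemma XE : [/\ X F i1 = row4 1 0 0 0, X F i2 = row4 0 1 0 0,
              X F i3 = row4 0 0 1 0 & X F i4 = row4 0 0 0 1].
Proof. by split; apply/rowP; apply: ord4P; rewrite !mxE. Qed.

Lemma eps_scalar : [/\ (eps R i1)%:A = 1 :> F, (eps R i2)%:A = 1 :> F,
                       (eps R i3)%:A = -1 :> F & (eps R i4)%:A = -1 :> F].
Proof. by rewrite /eps /= scale1r scaleN1r. Qed.

Lemma eps_sqr k : (eps R k)%:A * (eps R k)%:A = 1 :> F.
Proof. by rewrite -scalerAl mul1r scalerA /eps; case: ifP; rewrite ?mulrNN mulr1 scale1r. Qed.

Lemma gmet_Xr v k : gmet v (X F k) = (eps R k)%:A * v 0 k.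
Proof.
rewrite /gmet (bigD1 k) //= big1 ?addr0 => [|i ik]; first by rewrite X_coord eqxx mulr1.
by rewrite X_coord eq_sym (negbTE ik) mulr0.
Qed.

Lemma gmet_Xl v k : gmet (X F k) v = (eps R k)%:A * v 0 k.
Proof.
rewrite /gmet (bigD1 k) //= big1 ?addr0 => [|i ik].
  by rewrite X_coord eqxx mulr1 mulrC.
by rewrite X_coord eq_sym (negbTE ik) mulr0 mul0r.
Qed.

Lemma act_X D i f : act D (X F i) f = D i f.
Proof.
rewrite /act (bigD1 i) //= big1 ?addr0 => [|k ki]; first by rewrite X_coord eqxx mul1r.
by rewrite X_coord eq_sym (negbTE ki) mul0r.
Qed.

End Frame.

Section NaturalConnection.
Variables (R : realType) (F : comAlgType R) (c : 'I_4 -> 'I_4 -> vf F).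
Variables (D : 'I_4 -> F -> F) (nab : vf F -> vf F -> vf F).
Hypothesis D_scalar : forall i (a : R), D i a%:A = 0.

Definition christoffel i j k : F := nab (X F i) (X F j) 0 k.
Local Notation N i j := (nab (X F i) (X F j)).

Lemma bracket_X i j : bracket D c (X F i) (X F j) = c i j.
Proof.
have D_nat k n : D k n%:R = 0 by have := D_scalar k n%:R; rewrite scaler_nat.
rewrite /bracket (_ : \row_k _ = 0); last first.
  by apply/rowP => k; rewrite mxE !act_X !X_coord !D_nat subrr mxE.
rewrite add0r (bigD1 i) //= [X in _ + X]big1 ?addr0 => [|k ki]; last first.
  by rewrite big1 // => m _; rewrite [X F i 0 k]X_coord eq_sym (negbTE ki) mul0r scale0r.
rewrite (bigD1 j) //= [X in _ + X]big1 ?addr0 => [|k kj].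
  by rewrite !X_coord !eqxx mul1r scale1r.
by rewrite [X F j 0 k]X_coord eq_sym (negbTE kj) mulr0 scale0r.
Qed.

Lemma torsion3_X i j k :
  torsion3 D c nab (X F i) (X F j) (X F k) = (eps R k)%:A * (N i j - N j i - c i j) 0 k.
Proof. by rewrite /torsion3 /torsion bracket_X gmet_Xr. Qed.

Hypothesis skew : totally_skew D c nab.

Lemma torsion3_eq0 x y : [/\ torsion3 D c nab x x y = 0,
  torsion3 D c nab x y y = 0 & torsion3 D c nab y x y = 0].
Proof.
have T_xyy : torsion3 D c nab x y y = 0.
  by apply/eqP; rewrite -addrr_eq0 {1}(skew x y y).2 addNr.
split=> //; last by rewrite (skew y x y).1 T_xyy oppr0.
by apply/eqP; rewrite -addrr_eq0 {1}(skew x x y).1 addNr.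
Qed.

Hypothesis natural : is_natural D nab.

Lemma christoffel_metric i j k :
  (eps R k)%:A * christoffel i j k + (eps R j)%:A * christoffel i k j = 0.
Proof.
case: natural => _ /(_ (X F i) (X F j) (X F k)).
rewrite /christoffel act_X !gmet_Xr gmet_Xl X_coord => <-.
case: (j == k); rewrite /= ?mulr1n ?mulr0n ?mulr1 ?mulr0 ?D_scalar //.
by have := D_scalar i 0; rewrite scale0r.
Qed.

Lemma christoffel_diag i k : christoffel i k k = 0.
Proof.
have /eqP := christoffel_metric i k k; rewrite addrr_eq0 => /eqP e.
by rewrite -[christoffel i k k]mul1r -(eps_sqr F k) -mulrA e mulr0.
Qed.

Lemma nab_X3_J i : N i i3 = Jop (N i i1).
Proof.
by case: natural => nabJ _; have [X1 _ X3 _] := XE F; rewrite -nabJ X1 X3 Jop_row4 oppr0.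
Qed.

Lemma nab_X4_J i : N i i4 = Jop (N i i2).
Proof.
by case: natural => nabJ _; have [_ X2 _ X4] := XE F; rewrite -nabJ X2 X4 Jop_row4 oppr0.
Qed.

Lemma christoffel_natural i :
  [/\ christoffel i i1 i3 = 0, christoffel i i2 i4 = 0,
      christoffel i i2 i1 = - christoffel i i1 i2 &
      christoffel i i2 i3 = - christoffel i i1 i4].
Proof.
have [e1 e2 e3 e4] := eps_scalar F.
have metric j k := christoffel_metric i j k.
split.
- apply/eqP; rewrite -addrr_eq0 -oppr_eq0 opprD; apply/eqP.
  by have := metric i1 i3; rewrite e1 e3 /christoffel nab_X3_J mxE /= mulN1r mul1r.
- apply/eqP; rewrite -addrr_eq0 -oppr_eq0 opprD; apply/eqP.
  by have := metric i2 i4; rewrite e2 e4 /christoffel nab_X4_J mxE /= mulN1r mul1r.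
- by apply/eqP; have := metric i1 i2; rewrite e1 !mul1r addrC => /eqP; rewrite addr_eq0.
- have := metric i3 i2; rewrite e2 e3 /christoffel nab_X3_J mxE /= mulN1r mul1r.
  by move/eqP; rewrite subr_eq0 => /eqP <-.
Qed.

Lemma nab_X1 i : N i i1 = row4 0 (christoffel i i1 i2) 0 (christoffel i i1 i4).
Proof.
have [G13 _ _ _] := christoffel_natural i; have G11 := christoffel_diag i i1.
by rewrite [LHS]row4E; move: G11 G13; rewrite /christoffel => -> ->.
Qed.

Lemma nab_X2 i :
  N i i2 = row4 (- christoffel i i1 i2) 0 (- christoffel i i1 i4) 0.
Proof.
have [_ G24 G21 G23] := christoffel_natural i; have G22 := christoffel_diag i i2.
by rewrite [LHS]row4E; move: G21 G22 G23 G24; rewrite /christoffel => -> -> -> ->.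
Qed.

Lemma nab_X3 i : N i i3 = row4 0 (- christoffel i i1 i4) 0 (christoffel i i1 i2).
Proof. by rewrite nab_X3_J nab_X1 Jop_row4 oppr0. Qed.

Lemma nab_X4 i : N i i4 = row4 (christoffel i i1 i4) 0 (- christoffel i i1 i2) 0.
Proof. by rewrite nab_X4_J nab_X2 Jop_row4 !opprK oppr0. Qed.

Lemma christoffel_bracket a b : christoffel b a b = c b a 0 b.
Proof.
have [_ _] := torsion3_eq0 (X F a) (X F b).
rewrite torsion3_X => /(congr1 (fun x => (eps R b)%:A * x)).
rewrite mulrA eps_sqr mul1r mulr0 !mxE (christoffel_diag a b : N a b 0 b = 0) subr0.
by move/eqP; rewrite subr_eq0 => /eqP.
Qed.

End NaturalConnection.

Section Proposition.
Variables (R : realType) (F : comAlgType R) (l1 l2 l3 l4 : R).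
Variables (D : 'I_4 -> F -> F) (nab : vf F -> vf F -> vf F).
Local Notation c := (brX F l1 l2 l3 l4).
Hypotheses (D_scalar : forall i (a : R), D i a%:A = 0)
           (skew : totally_skew D c nab) (natural : is_natural D nab).
Local Notation G := (christoffel nab).

Lemma christoffel_brX :
  [/\ G i1 i1 i2 = - l1%:A /\ G i1 i1 i4 = - l3%:A,
      G i2 i1 i2 = - l2%:A /\ G i2 i1 i4 = - l4%:A,
      G i3 i1 i2 = - l3%:A /\ G i3 i1 i4 = l1%:A &
      G i4 i1 i2 = - l4%:A /\ G i4 i1 i4 = l2%:A].
Proof.
have bracket a b := christoffel_bracket D_scalar skew natural a b.
move: (bracket i2 i1) (bracket i4 i1) (bracket i1 i2) (bracket i3 i2).
move: (bracket i4 i3) (bracket i2 i3) (bracket i3 i4) (bracket i1 i4).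
rewrite /christoffel !(nab_X1 D_scalar natural) !(nab_X2 D_scalar natural).
rewrite !(nab_X3 D_scalar natural) !(nab_X4 D_scalar natural).
rewrite /brX /= !combE !opp_row4 !mxE /= !scaleNr !opprK.
move=> /(canRL opprK) p3 /oppr_inj q3 p4 q4 /(canRL opprK) p1 q1 p2 /(canRL opprK) q2.
by split; split.
Qed.

End Proposition.

Theorem proposition3p5 (R : realType) (F : comAlgType R)
  (l1 l2 l3 l4 : R) (D : 'I_4 -> F -> F) (nab : vf F -> vf F -> vf F) :
  is_frame_action D (brX F l1 l2 l3 l4) ->
  is_connection D nab ->
  is_natural D nab ->
  totally_skew D (brX F l1 l2 l3 l4) nab ->
  let nb := fun i j => nab (X F i) (X F j) in
  let T := fun i j k => torsion3 D (brX F l1 l2 l3 l4) nab (X F i) (X F j) (X F k) in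
  (nb i1 i1 = comb F 0 (- l1) 0 (- l3) /\ nb i3 i3 = comb F 0 (- l1) 0 (- l3) /\
      nb i2 i2 = comb F l2 0 l4 0 /\ nb i4 i4 = comb F l2 0 l4 0 /\
      nb i1 i2 = comb F l1 0 l3 0 /\ nb i3 i4 = comb F l1 0 l3 0 /\
      nb i1 i3 = comb F 0 l3 0 (- l1) /\ - nb i3 i1 = comb F 0 l3 0 (- l1) /\
      nb i1 i4 = comb F (- l3) 0 l1 0 /\ - nb i3 i2 = comb F (- l3) 0 l1 0 /\
      nb i2 i1 = comb F 0 (- l2) 0 (- l4) /\ nb i4 i3 = comb F 0 (- l2) 0 (- l4) /\
      nb i2 i3 = comb F 0 l4 0 (- l2) /\ - nb i4 i1 = comb F 0 l4 0 (- l2) /\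
      nb i2 i4 = comb F (- l4) 0 l2 0 /\ - nb i4 i2 = comb F (- l4) 0 l2 0 /\
      [/\ T i1 i3 i4 = l1%:A, T i2 i3 i4 = l2%:A, T i1 i2 i3 = (- l3)%:A,
          T i1 i2 i4 = (- l4)%:A &
          forall i j k : 'I_4, (i == j) || (j == k) || (i == k) -> T i j k = 0]).
Proof.
move=> frame _ natural skew nb T; rewrite {}/nb {}/T.
have D_scalar i a : D i a%:A = 0.
  by case: frame => _ dZ dM _; exact: derivation_scalar (dZ i) (dM i) a.
have [[p1 q1] [p2 q2] [p3 q3] [p4 q4]] := christoffel_brX D_scalar skew natural.
rewrite !(torsion3_X _ _ D_scalar) !(nab_X1 D_scalar natural) !(nab_X2 D_scalar natural).
rewrite !(nab_X3 D_scalar natural) !(nab_X4 D_scalar natural) p1 q1 p2 q2 p3 q3 p4 q4.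
do 16 (split; first by rewrite !combE ?opp_row4 ?scaleNr ?scale0r ?opprK ?oppr0).
split; last first.
  move=> i j k /orP[/orP[/eqP-> | /eqP->] | /eqP->].
  - by case: (torsion3_eq0 skew (X F j) (X F k)).
  - by case: (torsion3_eq0 skew (X F i) (X F k)).
  - by case: (torsion3_eq0 skew (X F j) (X F k)).
all: rewrite /brX /= !combE !opp_row4 !mxE /= /eps /= !scaleNr scale1r ?scale0r; ring.
Qed.
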